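(* Let $X_1=\mathbb{R}^6_{\ge0}$ with coordinates $x,y,z,u,v,w$, and let $G\le\mathrm{Sym}(6)$ be the group generated by the coordinate permutations $(u\ z)(v\ y)$ and $(w\ x)$; set $\mathbb{M}_{212}=X_1/G$ with quotient map $q$. Let $\mathbb{M}^{\mathrm{pl}}_{212}=q(\{(x,y,z,u,v,w)\in X_1: w\le x\le 2w\})\subset\mathbb{M}_{212}$. Then the link of $\mathbb{M}^{\mathrm{pl}}_{212}$, namely $q(\{w\le x\le 2w\}\cap\{x+y+z+u+v+w=1\})$, is contractible.
   Context: This is the cell of the moduli space of genus 3 tropical curves for the trivalent graph of type (212) (two loops attached by bridges to a pair of vertices joined by two parallel edges), with edge lengths $x,y,z,u,v,w$; $\mathbb{M}^{\mathrm{pl}}_{212}$ is the locus of such metric graphs arising (in the closure of smooth curves) as tropical plane quartics. *)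

From HB Require Import structures.
From mathcomp Require Import all_boot all_order all_algebra all_fingroup.
From mathcomp Require Import generic_quotient.
From mathcomp Require Import all_classical all_reals all_analysis.

Unset Printing Implicit Defensive.

Import Order.TTheory GRing.Theory Num.Theory.
Import numFieldNormedType.Exports.
Local Open Scope ring_scope.

Definition cx : 'I_6 := inord 0.
Definition cy : 'I_6 := inord 1.
Definition cz : 'I_6 := inord 2.
Definition cu : 'I_6 := inord 3.
Definition cv : 'I_6 := inord 4.
Definition cw : 'I_6 := inord 5.

Definition perm_uz_vy : {perm 'I_6} := (tperm cu cz * tperm cv cy)%g.
Definition perm_wx : {perm 'I_6} := tperm cw cx.
Definition G212 : {group {perm 'I_6}} := <<[set perm_uz_vy; perm_wx]>>%G.

Local Open Scope classical_set_scope.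

Definition orbrel (R : realType) (a b : 'rV[R]_6) : bool :=
  [exists s in G212, b == col_perm s a].

Lemma orbrel_refl (R : realType) : reflexive (@orbrel R).
Proof.
move=> a; apply/existsP; exists 1%g; rewrite group1 /=.
by apply/eqP; rewrite col_perm1.
Qed.

Lemma orbrel_sym (R : realType) : symmetric (@orbrel R).
Proof.
suff H : forall a b : 'rV[R]_6, orbrel R a b -> orbrel R b a.
  by move=> a b; apply/idP/idP; apply: H.
move=> a b /existsP [s /andP [sG /eqP ->]]; apply/existsP; exists s^-1%g.
rewrite groupV sG /=; apply/eqP; rewrite -col_permM mulVg col_perm1 //.
Qed.

Lemma orbrel_trans (R : realType) : transitive (@orbrel R).
Proof.
move=> b a c /existsP [s /andP [sG /eqP ->]] /existsP [t /andP [tG /eqP ->]].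
apply/existsP; exists (t * s)%g; rewrite groupM //=.
by apply/eqP; rewrite col_permM.
Qed.

Canonical orbrel_equiv (R : realType) : equiv_rel 'rV[R]_6 :=
  EquivRel (@orbrel R) (@orbrel_refl R) (@orbrel_sym R) (@orbrel_trans R).

Local Open Scope quotient_scope.
Notation quot212 R := (quotient_topology {eq_quot (orbrel_equiv R)}).

Definition q212 (R : realType) : 'rV[R]_6 -> quot212 R :=
  fun a => \pi_({eq_quot (orbrel_equiv R)}) a.

Definition X1 (R : realType) : set 'rV[R]_6 := [set a | forall i, 0 <= a ord0 i].

Definition pl_cone (R : realType) : set 'rV[R]_6 :=
  [set a | X1 R a /\ a ord0 cw <= a ord0 cx /\ a ord0 cx <= 2 * a ord0 cw].

Definition simplex6 (R : realType) : set 'rV[R]_6 :=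
  [set a | \sum_(i < 6) a ord0 i = 1].

Definition link_pl212 (R : realType) : set (quot212 R) :=
  q212 R @` (pl_cone R `&` simplex6 R).

Definition contractible (R : realType) {T : topologicalType} (A : set T) : Prop :=
  exists2 x0 : T, A x0 &
  exists H : T * R -> T,
    [/\ {within A `*` `[0%R, 1%R], continuous H},
        (forall a t, A a -> `[0%R, 1%R] t -> A (H (a, t))),
        (forall a, A a -> H (a, 0%R) = a) &
        (forall a, A a -> H (a, 1%R) = x0)].

From HB Require Import structures.
From mathcomp Require Import all_boot all_order all_algebra all_fingroup.
From mathcomp Require Import generic_quotient.
From mathcomp Require Import all_classical all_reals all_analysis.
Import numFieldNormedType.Exports.

(* The barycenter c = (1/6, ..., 1/6) lies in the convex cell
   {w <= x <= 2w} ∩ {x + y + z + u + v + w = 1} and is fixed by every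
   coordinate permutation, so the straight-line homotopy (a, t) ↦ (1 - t) a + t c
   preserves the cell and commutes with G.  It therefore descends to a
   contraction of the link; continuity on the quotient holds because q is an
   open map (G acts by homeomorphisms), so q × id is again a quotient map. *)

Set Implicit Arguments.
Unset Strict Implicit.
Import Order.TTheory GRing.Theory Num.Theory.
Local Open Scope ring_scope.
Local Open Scope classical_set_scope.

Section lerp.
Variables (R : numDomainType) (V : lmodType R).

Definition lerp (a b : V) (t : R) : V := (1 - t) *: a + t *: b.

Lemma lerp0 a b : lerp a b 0 = a.
Proof. by rewrite /lerp subr0 scale1r scale0r addr0. Qed.

Lemma lerp1 a b : lerp a b 1 = b.
Proof. by rewrite /lerp subrr scale0r scale1r add0r. Qed.

End lerp.

Section convex_combination.
Variable R : numDomainType.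

Lemma lerp_mxE m n (A B : 'M[R]_(m, n)) t i j :
  lerp A B t i j = line_path (A i j) (B i j) t.
Proof. by rewrite !mxE. Qed.

Lemma col_perm_lerp m n (s : 'S_n) (A B : 'M[R]_(m, n)) t :
  col_perm s (lerp A B t) = lerp (col_perm s A) (col_perm s B) t.
Proof. by apply/matrixP => i j; rewrite !mxE. Qed.

Lemma ler_line_path (x1 x2 y1 y2 t : R) : 0 <= t <= 1 ->
  x1 <= y1 -> x2 <= y2 -> line_path x1 x2 t <= line_path y1 y2 t.
Proof.
by case/andP => t0 t1 xy1 xy2; rewrite lerD // ler_wpM2l // subr_ge0.
Qed.

Lemma sum_line_path n (a b : 'I_n -> R) t :
  \sum_(i < n) line_path (a i) (b i) t =
  line_path (\sum_(i < n) a i) (\sum_(i < n) b i) t.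
Proof. by rewrite /line_path big_split /= -!mulr_sumr. Qed.

End convex_combination.

Lemma continuous_lerp (R : numFieldType) (V : normedModType R) (b : V) :
  continuous (fun z : V * R => lerp z.1 b z.2).
Proof.
move=> z.
apply: (@continuousD _ _ _ (fun z : V * R => (1 - z.2) *: z.1) (fun z => z.2 *: b)).
- apply: continuousZ; last exact: cvg_fst.
  by apply: (@continuousB _ R^o); [exact: cvg_cst | exact: cvg_snd].
- by apply: continuousZ; [exact: cvg_snd | exact: cvg_cst].
Qed.

Section link.
Variable R : realType.
Local Notation link_cell := (pl_cone R `&` simplex6 R).

Lemma pl_cone_convex (a b : 'rV[R]_6) t : 0 <= t <= 1 ->
  pl_cone R a -> pl_cone R b -> pl_cone R (lerp a b t).
Proof.
move=> t01 [a0 [awx axw]] [b0 [bwx bxw]]; split; last split.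
- move=> i; rewrite lerp_mxE.
  by have := ler_line_path t01 (a0 i) (b0 i); rewrite line_path_flat.
- by rewrite !lerp_mxE ler_line_path.
- rewrite !lerp_mxE.
  have -> : 2 * line_path (a ord0 cw) (b ord0 cw) t =
            line_path (2 * a ord0 cw) (2 * b ord0 cw) t.
    by rewrite /line_path mulrDr ![2 * (_ * _)]mulrCA.
  exact: ler_line_path.
Qed.

Lemma simplex6_convex (a b : 'rV[R]_6) t :
  simplex6 R a -> simplex6 R b -> simplex6 R (lerp a b t).
Proof.
rewrite /simplex6 /= => a1 b1.
under eq_bigr do rewrite lerp_mxE.
by rewrite sum_line_path a1 b1 line_path_flat.
Qed.

Lemma link_cell_convex (a b : 'rV[R]_6) t : 0 <= t <= 1 ->
  link_cell a -> link_cell b -> link_cell (lerp a b t).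
Proof.
move=> t01 [pa sa] [pb sb].
by split; [exact: pl_cone_convex | exact: simplex6_convex].
Qed.

Definition barycenter6 : 'rV[R]_6 := const_mx 6%:R^-1.

Lemma barycenter6_link_cell : link_cell barycenter6.
Proof.
have c_gt0 : (0 : R) < 6%:R^-1 by rewrite invr_gt0.
split; first split.
- by move=> i; rewrite mxE ltW.
- by rewrite !mxE lexx ler_pMl // ler1n.
rewrite /simplex6 /=; under eq_bigr do rewrite mxE.
by rewrite sumr_const card_ord -(mulr_natl (6%:R^-1)) mulfV // pnatr_eq0.
Qed.

End link.

Lemma continuous_col_perm (R : numFieldType) m n (s : 'S_n) :
  continuous (col_perm s : 'M[R]_(m, n) -> 'M[R]_(m, n)).
Proof.
move=> A; apply/(cvg_ballP (FF := nbhs_filter A)) => e e0.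
have : \forall B \near A, ball A e B by exact: nbhsx_ballx.
by apply: filterS => B [_ AB]; split => // i j; rewrite !mxE; exact: AB.
Qed.

Section quotient.
Variable R : realType.
Local Notation q := (q212 R).

Lemma q212_eq (a b : 'rV[R]_6) : q a = q b <-> orbrel R a b.
Proof. by split => /eqmodP. Qed.

Lemma q212_repr (p : quot212 R) : q (repr p) = p.
Proof. exact: reprK. Qed.

Lemma orbrel_col_perm s (a : 'rV[R]_6) : s \in G212 -> orbrel R a (col_perm s a).
Proof. by move=> sG; apply/existsP; exists s; rewrite sG eqxx. Qed.

Lemma q212_open (P : set 'rV[R]_6) : open P -> open (q @` P : set (quot212 R)).
Proof.
move=> oP; change (open (q @^-1` (q @` P))).
rewrite openE => b [a Pa /q212_eq /existsP [s /andP [sG /eqP bE]]].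
have : nbhs b (col_perm s^-1 @^-1` P).
  apply: continuous_col_perm; rewrite /= bE -col_permM mulVg col_perm1.
  exact: open_nbhs_nbhs.
apply: filterS => y Py; exists (col_perm s^-1 y) => //; apply/q212_eq.
by rewrite -{2}[y]col_perm1 -(mulgV s) col_permM orbrel_col_perm.
Qed.

Lemma continuous_q212_lift (T : topologicalType) (h : 'rV[R]_6 * T -> 'rV[R]_6) :
  continuous h -> (forall a b t, orbrel R a b -> orbrel R (h (a, t)) (h (b, t))) ->
  continuous (fun z : quot212 R * T => q (h (repr z.1, z.2))).
Proof.
move=> h_cont h_orb [p t] V /=.
rewrite (@nbhsE (quot212 R)) => -[U [oU hU] UV].
have : nbhs (repr p, t) (h @^-1` (q @^-1` U)).
  by apply: h_cont; exact: open_nbhs_nbhs.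
case=> -[P Q] /= [nP nQ] PQh.
move: nP; rewrite nbhsE => -[P' [oP' pP'] P'P].
exists (q @` P', Q) => /=.
  split => //; apply: (@open_nbhs_nbhs (quot212 R)); split; first exact: q212_open.
  by exists (repr p) => //; exact: q212_repr.
move=> [_ t'] [/= [b P'b <-] Qt']; apply: UV => /=.
have -> : q (h (repr (q b), t')) = q (h (b, t')).
  by apply/q212_eq/h_orb/q212_eq; rewrite q212_repr.
exact: (PQh (b, t') (conj (P'P b P'b) Qt')).
Qed.

Lemma orbrel_lerp_const (a b : 'rV[R]_6) k t :
  orbrel R a b -> orbrel R (lerp a (const_mx k) t) (lerp b (const_mx k) t).
Proof.
case/existsP => s /andP [sG /eqP ->].
have -> : lerp (col_perm s a) (const_mx k) t = col_perm s (lerp a (const_mx k) t).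
  by rewrite col_perm_lerp col_perm_const.
exact: orbrel_col_perm.
Qed.

End quotient.

Theorem mainTheorem6 (R : realType) : contractible R (link_pl212 R).
Proof.
pose c := barycenter6 R.
pose H (z : quot212 R * R) := q212 R (lerp (repr z.1) c z.2).
have c_link := barycenter6_link_cell R.
exists (q212 R c); first by exists c.
exists H; split.
- apply/continuous_subspaceT.
  apply: (continuous_q212_lift (h := fun z => lerp z.1 c z.2)).
    exact: continuous_lerp.
  by move=> a b t; exact: orbrel_lerp_const.
- move=> _ t [a Sa <-] /=; rewrite in_itv /= => t01.
  exists (lerp a c t); first exact: link_cell_convex.
  by apply/q212_eq/orbrel_lerp_const/q212_eq; rewrite q212_repr.
- by move=> p _; rewrite /H lerp0 q212_repr.
- by move=> p _; rewrite /H lerp1.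
Qed.
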